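(* Let $v_1\ge\cdots\ge v_n>0$, $1\ge q_1\ge\cdots\ge q_n\ge 0$, and $a=(a_1,\dots,a_n)\in(0,\infty)^n$. For $b\in(0,\infty)^n$ put $\lambda(b)=\frac{\sum_i v_i b_i q_i}{\sum_i v_i b_i}$, let $S=\sum_i v_i a_i$, and let $e_j$ be the $j$-th unit vector. Then $$\sum_{j=1}^n \frac{v_j a_j q_j}{S}\,\lambda(a+e_j)\;+\;\Big(1-\sum_{j=1}^n\frac{v_j a_j q_j}{S}\Big)\lambda(a)\;\ge\;\lambda(a).$$ Equivalently, in the dynamic trial-offer market under the quality ranking with social influence, for every step $t$ the conditional probability (given the history up to step $t$) of a purchase at step $t+1$ is at least the conditional probability of a purchase at step $t$; hence the expected number of purchases per step is non-decreasing in $t$.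
   Context: Dynamic trial-offer market with social influence under the quality ranking: products $1,\dots,n$ with initial appeals $A_i>0$, qualities $1\ge q_1\ge\cdots\ge q_n\ge0$, and product $i$ permanently displayed in position $i$ with visibility $v_i$, where $v_1\ge\cdots\ge v_n>0$. Let $d_{i,t}$ be the number of purchases of product $i$ before step $t$ ($d_{i,1}=0$) and $a_{i,t}=A_i+d_{i,t}$. At step $t$ one participant tries product $i$ with probability $\frac{v_i a_{i,t}}{\sum_j v_j a_{j,t}}$, then purchases it with probability $q_i$ (independently); if purchased, $d_{i,t+1}=d_{i,t}+1$, and all other counts are unchanged. The probability of a purchase at step $t$, given the history, is $\lambda(a_{\cdot,t})$. *)

From HB Require Import structures.
From mathcomp Require Import all_boot all_order all_algebra.
Set Implicit Arguments. Unset Strict Implicit. Unset Printing Implicit Defensive.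
Import Order.TTheory GRing.Theory Num.Theory.
Local Open Scope ring_scope.

Definition lam (R : realFieldType) (n : nat) (v q b : 'I_n -> R) : R :=
  (\sum_(i < n) v i * b i * q i) / (\sum_(i < n) v i * b i).

Definition add_unit (R : realFieldType) (n : nat) (b : 'I_n -> R) (j : 'I_n)
  : 'I_n -> R := fun i => b i + (i == j)%:R.

From HB Require Import structures.
From mathcomp Require Import all_boot all_order all_algebra.
From mathcomp Require Import ring lra.
Set Implicit Arguments. Unset Strict Implicit. Unset Printing Implicit Defensive.
Import Order.TTheory GRing.Theory Num.Theory.
Local Open Scope ring_scope.

(* Adding one purchase of product j moves lambda towards q_j by the factor
   v_j / (S + v_j).  Averaging these moves with the trial-and-purchase
   weights v_j a_j q_j / S, the expected change of lambda is proportional to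
   sum_j u_j g_j q_j - lambda * sum_j u_j g_j, where u_j = v_j a_j and
   g_j = q_j v_j / (S + v_j).  Since lambda = sum_j u_j q_j / sum_j u_j and
   both g and q are nonincreasing in the position, this is nonnegative by
   Chebyshev's sum inequality. *)

Section Chebyshev.

Variables (R : realFieldType) (I : finType).

Lemma chebyshev_sum_identity (u g h : I -> R) :
  \sum_i \sum_j u i * u j * ((g i - g j) * (h i - h j)) =
  2 * ((\sum_i u i) * (\sum_i u i * g i * h i)
       - (\sum_i u i * g i) * (\sum_i u i * h i)).
Proof.
transitivity (\sum_i (u i * g i * h i * (\sum_j u j)
    + u i * (\sum_j u j * g j * h j)
    - u i * g i * (\sum_j u j * h j) - u i * h i * (\sum_j u j * g j))).
  apply: eq_bigr => i _; rewrite !mulr_sumr -big_split -!sumrB /=.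
  by apply: eq_bigr => j _; ring.
by rewrite !sumrB big_split /= -!mulr_suml; ring.
Qed.

Lemma chebyshev_sum_le (u g h : I -> R) :
  (forall i, 0 <= u i) ->
  (forall i j, 0 <= (g i - g j) * (h i - h j)) ->
  (\sum_i u i * g i) * (\sum_i u i * h i) <=
  (\sum_i u i) * (\sum_i u i * g i * h i).
Proof.
move=> u_ge0 gh_ge0.
have : 0 <= \sum_i \sum_j u i * u j * ((g i - g j) * (h i - h j)).
  apply: sumr_ge0 => i _; apply: sumr_ge0 => j _.
  by rewrite mulr_ge0 // mulr_ge0.
by rewrite chebyshev_sum_identity; nra.
Qed.

End Chebyshev.

Lemma nonincreasing_similarly_ordered (R : realFieldType) (n : nat)
    (g h : 'I_n -> R) :
  (forall i j : 'I_n, (i <= j)%N -> g j <= g i) ->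
  (forall i j : 'I_n, (i <= j)%N -> h j <= h i) ->
  forall i j, 0 <= (g i - g j) * (h i - h j).
Proof.
move=> g_mono h_mono i j; have [ij | /ltnW ji] := leqP i j.
- by rewrite mulr_ge0 // subr_ge0 ?g_mono ?h_mono.
- by rewrite mulr_le0 // subr_le0 ?g_mono ?h_mono.
Qed.

Lemma ler_div_addl (R : realFieldType) (s x y : R) :
  0 < s -> 0 < x -> x <= y -> x / (s + x) <= y / (s + y).
Proof.
move=> s_gt0 x_gt0 le_xy; have y_gt0 := lt_le_trans x_gt0 le_xy.
rewrite ler_pdivlMr ?addr_gt0 // mulrAC ler_pdivrMr ?addr_gt0 //; nra.
Qed.

Section Market.

Variables (R : realFieldType) (n : nat).

Lemma sum_add_unit (c b : 'I_n -> R) (j : 'I_n) :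
  \sum_i c i * add_unit b j i = \sum_i c i * b i + c j.
Proof.
rewrite /add_unit; under eq_bigr do rewrite mulrDr.
rewrite big_split /=; congr (_ + _).
by rewrite (bigD1 j) //= eqxx mulr1 big1 ?addr0 // => i /negbTE ->; rewrite mulr0.
Qed.

Variables (v q a : 'I_n -> R).

Let S := \sum_i v i * a i.

Lemma lam_add_unitE (j : 'I_n) : 0 < S -> 0 < v j ->
  lam v q (add_unit a j) - lam v q a = v j / (S + v j) * (q j - lam v q a).
Proof.
move=> S_gt0 vj_gt0; rewrite /lam.
have -> : \sum_i v i * add_unit a j i * q i = \sum_i v i * a i * q i + v j * q j.
  under eq_bigr do rewrite mulrAC.
  by rewrite sum_add_unit; under eq_bigr do rewrite mulrAC.
rewrite sum_add_unit -/S; field.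
by rewrite !gt_eqF ?addr_gt0.
Qed.

End Market.

Theorem mainTheorem3 (R : realFieldType) (n : nat) (v q a : 'I_n -> R)
  (hv_mono : forall i j : 'I_n, (i <= j)%N -> v j <= v i)
  (hv_pos : forall i : 'I_n, 0 < v i)
  (hq_mono : forall i j : 'I_n, (i <= j)%N -> q j <= q i)
  (hq_le1 : forall i : 'I_n, q i <= 1)
  (hq_ge0 : forall i : 'I_n, 0 <= q i)
  (ha_pos : forall i : 'I_n, 0 < a i) :
  let S := \sum_(i < n) v i * a i in
  \sum_(j < n) (v j * a j * q j / S) * lam v q (add_unit a j)
    + (1 - \sum_(j < n) v j * a j * q j / S) * lam v q a
  >= lam v q a.
Proof.
cbv zeta; set S := \sum_(i < n) v i * a i; set L := lam v q a.
have u_ge0 i : 0 <= v i * a i by rewrite mulr_ge0 ?ltW.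
have /predU1P[S0 | S_gt0] : (0 == S) || (0 < S) by rewrite -le_eqVlt sumr_ge0.
- (* with S = 0, every weight and lambda itself are the junk value x / 0 = 0 *)
  have w0 j : v j * a j * q j / S = 0 by rewrite -S0 invr0 mulr0.
  have L0 : L = 0 by rewrite /L /lam -/S -S0 invr0 mulr0.
  by rewrite L0 mulr0 addr0 big1 // => j _; rewrite w0 mul0r.
pose g j := q j * v j / (S + v j).
have g_mono (i j : 'I_n) : (i <= j)%N -> g j <= g i.
  move=> ij; rewrite /g -!mulrA ler_pM ?hq_mono ?ler_div_addl ?hv_mono //.
  by rewrite divr_ge0 ?addr_ge0 ?ltW.
have cheb := chebyshev_sum_le u_ge0
  (nonincreasing_similarly_ordered g_mono hq_mono).
have gain : 0 <= \sum_j v j * a j * q j / S * (lam v q (add_unit a j) - L).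
  have -> : \sum_j v j * a j * q j / S * (lam v q (add_unit a j) - L) =
      S^-1 * (\sum_j v j * a j * g j * q j - L * \sum_j v j * a j * g j).
    rewrite mulr_sumr -sumrB mulr_sumr; apply: eq_bigr => j _.
    by rewrite lam_add_unitE // -/L /g; ring.
  rewrite mulr_ge0 ?invr_ge0 ?(ltW S_gt0) // subr_ge0 /L /lam -/S.
  by rewrite mulrAC ler_pdivrMr // mulrC [leRHS]mulrC.
move: gain; under eq_bigr do rewrite mulrBr.
by rewrite sumrB -mulr_suml mulrBl mul1r; lra.
Qed.
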